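(* There is an absolute constant $C$ such that for every prime power $q$, every $0<\varepsilon<1$, and every (unweighted) linear code $\mathcal{C}\subseteq\mathbb{F}_q^n$ of dimension $k \ge 1$, $\mathcal{C}$ has a $(1\pm\varepsilon)$-sparsifier of size at most $C k^2 \log_2(q)/\varepsilon^2$. Moreover, one such sparsifier is obtained with positive probability as follows: for each coordinate $i$ in the support of $\mathcal{C}$ let $w_i = \min\{\mathrm{wt}(c) : c\in\mathcal{C}, c_i\neq 0\}$, and sample coordinate $i$ independently with probability $p_i=\min(1, 10 k\log_2(q)/(\varepsilon^2 w_i))$, assigning weight $1/p_i$ if sampled.
   Context: $\mathrm{wt}(c)$ is the number of nonzero coordinates. The support of $\mathcal{C}$ is the set of coordinates $i$ such that some codeword is nonzero at $i$. A $(1\pm\varepsilon)$-sparsifier of size $s$ is a set $S\subseteq[n]$, $|S|\le s$, with nonnegative weights $(w'_i)_{i\in S}$ such that $(1-\varepsilon)\mathrm{wt}(v)\le\sum_{i\in S:v_i\neq0}w'_i\le(1+\varepsilon)\mathrm{wt}(v)$ for all $v\in\mathcal{C}$. *)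

From HB Require Import structures.
From mathcomp Require Import all_boot all_order all_algebra.
From mathcomp Require Import boolp reals exp.
Set Implicit Arguments. Unset Strict Implicit. Unset Printing Implicit Defensive.
Import Order.TTheory GRing.Theory Num.Theory.
Local Open Scope ring_scope.

Section Codes.
Variables (F : finFieldType) (n : nat).

Definition wt (v : 'rV[F]_n) : nat := #|[set i : 'I_n | v 0 i != 0]|.

Definition code_support (C : {vspace 'rV[F]_n}) : {set 'I_n} :=
  [set i : 'I_n | [exists v : 'rV[F]_n, (v \in C) && (v 0 i != 0)]].

(* w_i = min { wt c : c in C, c_i <> 0 } (default n, irrelevant on the support). *)
Definition min_wt (C : {vspace 'rV[F]_n}) (i : 'I_n) : nat :=
  \big[minn/n]_(v : 'rV[F]_n | (v \in C) && (v 0 i != 0)) wt v.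

Variable R : realType.

Definition is_sparsifier (C : {vspace 'rV[F]_n}) (eps : R)
    (S : {set 'I_n}) (w : 'I_n -> R) : Prop :=
  (forall i, i \in S -> 0 <= w i) /\
  (forall v, v \in C ->
     (1 - eps) * (wt v)%:R <= \sum_(i in S | v 0 i != 0) w i /\
     \sum_(i in S | v 0 i != 0) w i <= (1 + eps) * (wt v)%:R).

Definition log2 (x : R) : R := ln x / ln 2.

Definition samp_prob (C : {vspace 'rV[F]_n}) (eps : R) (i : 'I_n) : R :=
  Num.min 1 (10 * (\dim C)%:R * log2 #|F|%:R / (eps ^+ 2 * (min_wt C i)%:R)).

(* Probability that the independent sampling over the support returns exactly S
   (meaningful for S \subset code_support C). *)
Definition samp_pr (C : {vspace 'rV[F]_n}) (eps : R) (S : {set 'I_n}) : R :=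
  \prod_(i in code_support C)
     (if i \in S then samp_prob C eps i else 1 - samp_prob C eps i).

Definition samp_weight (C : {vspace 'rV[F]_n}) (eps : R) (i : 'I_n) : R :=
  (samp_prob C eps i)^-1.

End Codes.

(* Sample coordinate i with probability p_i and weight 1/p_i, and let L = 10 k log2 q.
   For a nonzero codeword v the weighted count of sampled coordinates of its support is
   a sum of independent variables with mean wt v, each bounded by 1/p_i <= eps^2 wt v / L
   because w_i <= wt v; a Chernoff bound puts it outside (1 +- eps) wt v with probability
   at most e^(-L/4) + e^(-L/3), which is small enough to be union-bounded over the q^k
   codewords.  The expected sample size is at most (L / eps^2) * sum_i 1/w_i <= k L / eps^2,
   since sum_i 1/w_i <= k: the support of a minimum-weight codeword contributes exactly 1,
   and zeroing it out lowers the dimension without increasing the other w_i.  Markov's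
   inequality then yields a good sample with positive probability. *)

From HB Require Import structures.
From mathcomp Require Import all_boot all_order all_algebra.
From mathcomp Require Import boolp reals sequences exp finfield.
From mathcomp Require Import ring lra.
Set Implicit Arguments. Unset Strict Implicit. Unset Printing Implicit Defensive.
Import Order.TTheory GRing.Theory Num.Theory.
Local Open Scope ring_scope.

Section ExpBounds.
Variable R : realType.
Implicit Types p t y M : R.

Lemma expR_ge_sqr_half y : 0 <= y -> (1 + y / 2) ^+ 2 <= expR y.
Proof.
move=> y0; have -> : expR y = expR (y / 2) ^+ 2.
  by rewrite -expRM_natl; congr expR; field.
rewrite lerXn2r ?nnegrE ?expR_ge0 ?expR_ge1Dx //; lra.
Qed.

Lemma expRN_le_quadratic y : 0 <= y -> expR (- y) <= 1 - y + 3 / 4 * y ^+ 2.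
Proof.
move=> y0; have sq := expR_ge_sqr_half y0.
have eN : expR (- y) * expR y = 1 by rewrite -expRD addNr expR0.
have e0 := expR_gt0 (- y).
have y4 : 0 <= y ^+ 2 * y ^+ 2 by rewrite mulr_ge0 ?exprn_ge0.
have : 1 <= (1 - y + 3 / 4 * y ^+ 2) * (1 + y / 2) ^+ 2 by nra.
have : 0 <= 1 - y + 3 / 4 * y ^+ 2 by nra.
nra.
Qed.

Lemma expR_mul_1B_le1 y : y < 1 -> expR y * (1 - y) <= 1.
Proof.
move=> y1; have := expR_ge1Dx (- y).
have : expR y * expR (- y) = 1 by rewrite -expRD subrr expR0.
have := expR_gt0 y; nra.
Qed.

Lemma expR_le_quadratic y : 0 <= y <= 1 / 2 -> expR y <= 1 + y + y ^+ 2.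
Proof.
move=> /andP[y0 y1]; have -> : expR y = expR (y / 4) ^+ 4.
  by rewrite -expRM_natl; congr expR; field.
have e0 := expR_gt0 (y / 4).
have e4 : (expR (y / 4) * (1 - y / 4)) ^+ 4 <= 1.
  apply: exprn_ile1; last by apply: expR_mul_1B_le1; lra.
  by rewrite mulr_ge0 ?expR_ge0 //; lra.
have : 1 <= (1 - y / 4) ^+ 4 * (1 + y + y ^+ 2) by nra.
have : 0 <= expR (y / 4) ^+ 4 by rewrite exprn_ge0 ?expR_ge0.
rewrite exprMn in e4; nra.
Qed.

Lemma prod_le_expR_card (I : finType) (A : {set I}) (G : I -> R) c :
  (forall i, i \in A -> 0 <= G i <= expR c) -> \prod_(i in A) G i <= expR (#|A|%:R * c).
Proof. by move=> G_bound; rewrite expRM_natl -prodr_const ler_prod. Qed.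

(* [p * expR (t / p) + (1 - p)] is the moment generating function of the variable
   equal to [1 / p] with probability [p] and to [0] otherwise. *)
Lemma scaled_bernoulli_mgf_le p t M : 0 < p <= 1 -> 0 <= t ->
  (p < 1 -> p^-1 <= M) -> 0 <= M -> t * M <= 1 / 2 ->
  p * expR (t / p) + (1 - p) <= expR (t + t ^+ 2 * M).
Proof.
move=> /andP[p0 p1] t0 pM M0 tM.
have tM0 : 0 <= t ^+ 2 * M by rewrite mulr_ge0 ?exprn_ge0.
have [->|p_neq1] := eqVneq p 1.
  by rewrite divr1 mul1r subrr addr0 ler_expR; lra.
have {}pM : p^-1 <= M by apply: pM; rewrite lt_neqAle p_neq1.
have tp0 : 0 <= t / p by rewrite divr_ge0 // ltW.
have tp1 : t / p <= 1 / 2 by apply: le_trans tM; rewrite ler_wpM2l.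
apply: le_trans (expR_ge1Dx _).
have : p * expR (t / p) <= p + t + t ^+ 2 * p^-1.
  have -> : p + t + t ^+ 2 * p^-1 = p * (1 + t / p + (t / p) ^+ 2).
    by field; rewrite gt_eqF.
  by apply: ler_wpM2l; [exact: ltW | apply: expR_le_quadratic; rewrite tp0 tp1].
have : t ^+ 2 * p^-1 <= t ^+ 2 * M by rewrite ler_wpM2l ?exprn_ge0.
lra.
Qed.

Lemma scaled_bernoulli_mgfN_le p t M : 0 < p <= 1 -> 0 <= t ->
  (p < 1 -> p^-1 <= M) -> 0 <= M ->
  p * expR (- (t / p)) + (1 - p) <= expR (- t + 3 / 4 * t ^+ 2 * M).
Proof.
move=> /andP[p0 p1] t0 pM M0.
have tM0 : 0 <= 3 / 4 * t ^+ 2 * M by rewrite !mulr_ge0 ?exprn_ge0 //; lra.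
have [->|p_neq1] := eqVneq p 1.
  by rewrite divr1 mul1r subrr addr0 ler_expR; lra.
have {}pM : p^-1 <= M by apply: pM; rewrite lt_neqAle p_neq1.
have tp0 : 0 <= t / p by rewrite divr_ge0 // ltW.
apply: le_trans (expR_ge1Dx _).
have : p * expR (- (t / p)) <= p - t + 3 / 4 * t ^+ 2 * p^-1.
  have -> : p - t + 3 / 4 * t ^+ 2 * p^-1 = p * (1 - t / p + 3 / 4 * (t / p) ^+ 2).
    by field; rewrite gt_eqF.
  by apply: ler_wpM2l; [exact: ltW | exact: expRN_le_quadratic].
have : 3 / 4 * t ^+ 2 * p^-1 <= 3 / 4 * t ^+ 2 * M.
  by rewrite ler_wpM2l // mulr_ge0 ?exprn_ge0 //; lra.
lra.
Qed.

Lemma ln2_gt0 : 0 < ln (2 : R).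
Proof. by apply: ln_gt0; lra. Qed.

Lemma ln2_le1 : ln (2 : R) <= 1.
Proof. by have := @le_ln1Dx R 1 ltac:(lra); rewrite (_ : 1 + 1 = 2 :> R). Qed.

Lemma log2_ge1 (x : R) : 2 <= x -> 1 <= log2 x.
Proof.
move=> x2; rewrite /log2 ler_pdivlMr ?ln2_gt0 // mul1r ler_ln ?posrE //; lra.
Qed.

End ExpBounds.

Lemma sum_set_prod (R : comPzSemiRingType) (I : finType) (G : I -> bool -> R) :
  \sum_(S : {set I}) \prod_i G i (i \in S) = \prod_i (G i true + G i false).
Proof.
under [RHS]eq_bigr do rewrite -big_bool.
rewrite bigA_distr_bigA (reindex (fun f : {ffun I -> bool} => [set i | f i])) /=.
  by apply: eq_bigr => f _; apply: eq_bigr => i _; rewrite inE.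
exists (fun S : {set I} => [ffun i => i \in S]) => [f _ | S _].
  by apply/ffunP => i; rewrite ffunE inE.
by apply/setP => i; rewrite inE ffunE.
Qed.

(* [sample_pr S] is the probability that keeping each [i \in T] independently with
   probability [p i], and nothing outside [T], yields exactly [S]. *)
Section IndependentSampling.
Variables (R : realType) (I : finType) (T : {set I}) (p : I -> R).
Hypothesis p01 : forall i, i \in T -> 0 <= p i <= 1.

Definition bern_factor i (b : bool) : R :=
  if i \in T then (if b then p i else 1 - p i) else (if b then 0 else 1).

Definition sample_pr (S : {set I}) : R := \prod_i bern_factor i (i \in S).

Definition bern_mean i (f : bool -> R) : R :=
  if i \in T then p i * f true + (1 - p i) * f false else f false.

Lemma sample_pr_ge0 S : 0 <= sample_pr S.
Proof.
apply: prodr_ge0 => i _; rewrite /bern_factor.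
by case: ifP => iT; case: (i \in S) => //; have := p01 iT; lra.
Qed.

Lemma expect_prod (f : I -> bool -> R) :
  \sum_S sample_pr S * \prod_i f i (i \in S) = \prod_i bern_mean i (f i).
Proof.
have -> : \prod_i bern_mean i (f i) =
    \prod_i (bern_factor i true * f i true + bern_factor i false * f i false).
  by apply: eq_bigr => i _; rewrite /bern_mean /bern_factor; case: ifP => _; lra.
rewrite -(sum_set_prod (fun i b => bern_factor i b * f i b)).
by apply: eq_bigr => S _; rewrite -big_split.
Qed.

Lemma sum_sample_pr : \sum_S sample_pr S = 1.
Proof.
have := expect_prod (fun _ _ => 1).
have -> : \prod_i bern_mean i (fun=> 1) = 1.
  by apply: big1 => i _; rewrite /bern_mean; case: ifP => _; lra.
by move=> <-; apply: eq_bigr => S _; rewrite big1 ?mulr1.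
Qed.

Lemma sample_pr_neq0_sub S : sample_pr S != 0 -> S \subset T.
Proof.
apply: contraR => /subsetPn[i iS iT].
by rewrite /sample_pr (bigD1 i) //= /bern_factor (negbTE iT) iS mul0r.
Qed.

Lemma expect_mem i : \sum_S sample_pr S * (i \in S)%:R = if i \in T then p i else 0.
Proof.
have := expect_prod (fun j b => if j == i then b%:R else 1).
have -> : \sum_S sample_pr S * \prod_j (if j == i then (j \in S)%:R else 1) =
          \sum_S sample_pr S * (i \in S)%:R.
  apply: eq_bigr => S _; congr (_ * _).
  by rewrite (bigD1 i) //= eqxx big1 ?mulr1 // => j /negbTE ->.
move=> ->; rewrite (bigD1 i) //= eqxx big1 ?mulr1.
  by rewrite /bern_mean; case: ifP => _; rewrite ?mulr1 ?mulr0 ?addr0.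
by move=> j /negbTE ji; rewrite /bern_mean ji; case: ifP => _; lra.
Qed.

Lemma expect_card : \sum_S sample_pr S * #|S|%:R = \sum_(i in T) p i.
Proof.
transitivity (\sum_i \sum_S sample_pr S * (i \in S)%:R).
  rewrite exchange_big; apply: eq_bigr => S _.
  rewrite -mulr_sumr -sum1_card natr_sum big_mkcond; congr (_ * _).
  by apply: eq_bigr => i _; case: (i \in S).
by rewrite [RHS]big_mkcond; apply: eq_bigr => i _; exact: expect_mem.
Qed.

End IndependentSampling.

Lemma ler_sum_subpred (R : numDomainType) (I : finType) (A B : pred I) (f : I -> R) :
  {subset A <= B} -> (forall i, B i -> 0 <= f i) ->
  \sum_(i | A i) f i <= \sum_(i | B i) f i.
Proof.
move=> AB f_ge0; rewrite [leRHS](bigID A) /=.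
have -> : \sum_(i | B i && A i) f i = \sum_(i | A i) f i.
  by apply: eq_bigl => i; case Ai: (A i); rewrite ?andbT ?andbF //; apply: AB.
by rewrite lerDl sumr_ge0 // => i /andP[/f_ge0].
Qed.

Section CodeWeights.
Variables (F : finFieldType) (n : nat).
Implicit Types (C : {vspace 'rV[F]_n}) (u v : 'rV[F]_n) (A : {set 'I_n}).

Definition supp v : {set 'I_n} := [set i | v 0 i != 0].

Lemma wt_le_n v : (wt v <= n)%N.
Proof. by rewrite /wt (leq_trans (max_card _)) ?card_ord. Qed.

Lemma wt_eq0 v : (wt v == 0)%N = (v == 0).
Proof.
rewrite /wt cards_eq0; apply/eqP/eqP => [v0 | ->]; last first.
  by apply/setP => i; rewrite !inE mxE eqxx.
apply/rowP => j; rewrite mxE; apply/eqP/negPn/negP => vj.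
by have := in_set0 j; rewrite -v0 inE vj.
Qed.

Lemma wt_gt0 v i : v 0 i != 0 -> (0 < wt v)%N.
Proof. by rewrite lt0n wt_eq0; apply: contraNneq => ->; rewrite mxE. Qed.

Lemma mem_code_support C i v : v \in C -> v 0 i != 0 -> i \in code_support C.
Proof. by move=> vC vi; rewrite inE; apply/existsP; exists v; rewrite vC vi. Qed.

Lemma min_wt_le C i v : v \in C -> v 0 i != 0 -> (min_wt C i <= wt v)%N.
Proof.
move=> vC vi; have /= := @bigmin_le_cond _ nat _ n v
  (fun u => (u \in C) && (u 0 i != 0)) (@wt F n).
by rewrite minEnat vC vi; apply.
Qed.

Lemma min_wt_attained C i : i \in code_support C ->
  exists2 v, (v \in C) && (v 0 i != 0) & wt v = min_wt C i.
Proof.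
rewrite inE => /existsP[v0 v0Ci].
have [v vCi] := @eq_bigmin _ nat _ n v0 (fun u => (u \in C) && (u 0 i != 0))
  (@wt F n) v0Ci (fun v _ => wt_le_n v).
by rewrite /min_wt minEnat => ->; exists v.
Qed.

Lemma min_wt_gt0 C i : i \in code_support C -> (0 < min_wt C i)%N.
Proof. by case/min_wt_attained => v /andP[_ /wt_gt0] + <-. Qed.

Definition zero_coords A : 'End('rV[F]_n) :=
  linfun (mulmxr (diag_mx (\row_j (j \notin A)%:R))).

Lemma zero_coordsE A u j : zero_coords A u 0 j = if j \in A then 0 else u 0 j.
Proof. by rewrite lfunE /= mul_mx_diag !mxE; case: (j \in A); rewrite ?mulr0 ?mulr1. Qed.

Lemma wt_zero_coords_le A u : (wt (zero_coords A u) <= wt u)%N.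
Proof.
apply/subset_leq_card/subsetP => j; rewrite !inE zero_coordsE.
by case: (j \in A); rewrite ?eqxx.
Qed.

Lemma dim_zero_coords_lt C A v : v \in C -> v != 0 -> supp v \subset A ->
  (\dim (zero_coords A @: C) < \dim C)%N.
Proof.
move=> vC v_neq0 vA.
rewrite -(limg_ker_dim (zero_coords A) C) -[X in (X < _)%N]add0n ltn_add2r.
rewrite lt0n dimv_eq0; apply: contraNneq v_neq0 => ker0.
suff : v \in (C :&: lker (zero_coords A))%VS by rewrite ker0 memv0.
rewrite memv_cap vC memv_ker; apply/eqP/rowP => j; rewrite zero_coordsE mxE.
case: ifP => // /negbT jA; apply/eqP/negPn; apply: contra jA => vj.
by rewrite (subsetP vA) ?inE.
Qed.

Lemma zero_coords_min_wt C A i : i \in code_support C -> i \notin A ->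
  i \in code_support (zero_coords A @: C) /\
  (min_wt (zero_coords A @: C) i <= min_wt C i)%N.
Proof.
case/min_wt_attained => u /andP[uC ui] <- iA.
have uAi : zero_coords A u 0 i != 0 by rewrite zero_coordsE (negbTE iA).
have uAC : zero_coords A u \in (zero_coords A @: C)%VS by apply: memv_img.
split; first exact: mem_code_support uAC uAi.
exact: leq_trans (min_wt_le uAC uAi) (wt_zero_coords_le A u).
Qed.

Lemma min_wt_on_supp C v : v \in C ->
  (forall u, u \in C -> u != 0 -> (wt v <= wt u)%N) ->
  forall i, i \in supp v -> min_wt C i = wt v.
Proof.
move=> vC v_min i; rewrite inE => vi; apply/eqP; rewrite eqn_leq min_wt_le //=.
case/min_wt_attained: (mem_code_support vC vi) => u /andP[uC ui] <-.
by apply: v_min uC _; apply: contraNneq ui => ->; rewrite mxE.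
Qed.

Lemma min_wt_codeword_exists C : code_support C != set0 ->
  exists v, [/\ v \in C, v != 0 & forall u, u \in C -> u != 0 -> (wt v <= wt u)%N].
Proof.
case/set0Pn => i; rewrite inE => /existsP[v0 /andP[v0C v0i]].
have exP : exists d, [exists v, [&& v \in C, v != 0 & wt v == d]].
  exists (wt v0); apply/existsP; exists v0; rewrite v0C eqxx andbT.
  by apply: contraNneq v0i => ->; rewrite mxE.
case: (ex_minnP exP) => d /existsP[v /and3P[vC v_neq0 /eqP wv]] d_min.
exists v; split=> // u uC u_neq0; rewrite wv d_min //.
by apply/existsP; exists u; rewrite uC u_neq0 /=.
Qed.

Lemma sum_inv_min_wt_le_dim (R : realFieldType) C :
  \sum_(i in code_support C) ((min_wt C i)%:R : R)^-1 <= (\dim C)%:R.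
Proof.
move: {2}(\dim C) (leqnn (\dim C)) => m; elim: m C => [|m IH] C dimC.
  rewrite big_pred0 // => i; apply/negbTE; rewrite inE; apply/existsP => -[v].
  move: dimC; rewrite leqn0 dimv_eq0 => /eqP->.
  by rewrite memv0 => /andP[/eqP-> ]; rewrite mxE eqxx.
have [->|/min_wt_codeword_exists[v [vC v_neq0 v_min]]] := eqVneq (code_support C) set0.
  by rewrite big_set0.
set A := supp v; set C' := (zero_coords A @: C)%VS.
have dimC' : (\dim C' < \dim C)%N by apply: dim_zero_coords_lt vC v_neq0 _.
have AC : {subset A <= code_support C}.
  by move=> i; rewrite inE => vi; apply: mem_code_support vC vi.
rewrite (bigID (mem A)) /=.
have -> : \sum_(i in code_support C | i \in A) ((min_wt C i)%:R : R)^-1 = 1.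
  rewrite (eq_bigl (mem A)) => [|i]; last by rewrite andb_idl // => /AC.
  rewrite (eq_bigr (fun=> (wt v)%:R^-1)) => [|i iA].
    rewrite sumr_const; change #|A| with (wt v).
    by rewrite -[_ *+ wt v]mulr_natr mulVf // pnatr_eq0 wt_eq0.
  by rewrite (min_wt_on_supp vC v_min).
have dimC_gt0 : (0 < \dim C)%N by apply: leq_ltn_trans dimC'.
rewrite -(subnK dimC_gt0) natrD addrC lerD2r.
apply: le_trans (_ : (\dim C')%:R <= _); last by rewrite ler_nat -ltnS subn1 prednK.
apply: le_trans (IH C' _); last by rewrite -ltnS (leq_trans dimC').
apply: le_trans (_ : \sum_(i in code_support C | i \notin A) ((min_wt C' i)%:R : R)^-1 <= _).
  apply: ler_sum => i /andP[iC iA]; have [iC' leC'] := zero_coords_min_wt iC iA.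
  by rewrite lef_pV2 ?ler_nat // posrE ltr0n ?(leq_trans _ leC') ?min_wt_gt0.
apply: ler_sum_subpred => [i /andP[iC iA] | i _]; last by rewrite invr_ge0.
by have [] := zero_coords_min_wt iC iA.
Qed.

End CodeWeights.

Section Sparsification.
Variables (R : realType) (F : finFieldType) (n : nat).
Variables (C : {vspace 'rV[F]_n}) (eps : R).
Hypotheses (eps01 : 0 < eps < 1) (dimC_gt0 : (1 <= \dim C)%N).
Implicit Types (v : 'rV[F]_n) (S : {set 'I_n}).

Local Notation p := (samp_prob C eps).
Local Notation Pr := (sample_pr (code_support C) p).
Let k : R := (\dim C)%:R.
Let q : R := #|F|%:R.
Let L : R := 10 * k * log2 q.
Let bound : R := 1000 * k ^+ 2 * log2 q / eps ^+ 2.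

Let eps_gt0 : 0 < eps. Proof. by case/andP: eps01. Qed.
Let k_ge1 : 1 <= k. Proof. by rewrite ler1n. Qed.
Let q_ge2 : 2 <= q. Proof. by rewrite ler_nat card_finNzRing_gt1. Qed.
Let log2q_ge1 : 1 <= log2 q. Proof. exact: log2_ge1. Qed.
Let k_gt0 : 0 < k. Proof. exact: lt_le_trans ltr01 k_ge1. Qed.
Let log2q_gt0 : 0 < log2 q. Proof. exact: lt_le_trans ltr01 log2q_ge1. Qed.
Let L_gt0 : 0 < L. Proof. by do 2 apply: mulr_gt0 => //. Qed.
Let bound_gt0 : 0 < bound.
Proof.
by apply: divr_gt0; rewrite ?exprn_gt0 //; do 2 apply: mulr_gt0 => //; rewrite exprn_gt0.
Qed.

Lemma samp_prob_ge0 i : 0 <= p i.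
Proof.
rewrite /samp_prob le_min ler01 divr_ge0 ?(ltW L_gt0) //.
by rewrite mulr_ge0 ?exprn_ge0 ?(ltW eps_gt0).
Qed.

Lemma samp_prob_le1 i : p i <= 1.
Proof. by rewrite /samp_prob ge_min lexx. Qed.

Lemma samp_prob_gt0 i : i \in code_support C -> 0 < p i.
Proof.
move=> iC; rewrite /samp_prob lt_min ltr01 divr_gt0 //.
by rewrite mulr_gt0 ?exprn_gt0 ?ltr0n ?min_wt_gt0 ?eps_gt0.
Qed.

Lemma samp_prob_lt1E i : p i < 1 -> p i = L / (eps ^+ 2 * (min_wt C i)%:R).
Proof.
by rewrite /samp_prob gt_min ltxx /= => /ltW /min_r.
Qed.

Definition sparse_wt v S : R := \sum_(i in S | v 0 i != 0) samp_weight C eps i.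

Definition approx v S : bool :=
  (1 - eps) * (wt v)%:R <= sparse_wt v S <= (1 + eps) * (wt v)%:R.

Lemma is_sparsifier_sample S : (forall v, v \in C -> approx v S) ->
  is_sparsifier C eps S (samp_weight C eps).
Proof.
move=> S_approx; split=> [i _ | v /S_approx /andP//].
by rewrite invr_ge0 samp_prob_ge0.
Qed.

Lemma expect_expR_sparse_wt_le v t c : v \in C ->
  (forall i, v 0 i != 0 -> p i * expR (t / p i) + (1 - p i) <= expR c) ->
  \sum_S Pr S * expR (t * sparse_wt v S) <= expR ((wt v)%:R * c).
Proof.
move=> vC mgf_le.
have -> : \sum_S Pr S * expR (t * sparse_wt v S) =
    \prod_(i in supp v) (p i * expR (t / p i) + (1 - p i)).
  pose f i (b : bool) := if b && (v 0 i != 0) then expR (t / p i) else 1.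
  transitivity (\sum_S Pr S * \prod_i f i (i \in S)).
    apply: eq_bigr => S _; congr (_ * _).
    by rewrite /sparse_wt mulr_sumr expR_sum big_mkcond.
  apply: (etrans (expect_prod _ _ f)).
  rewrite [RHS]big_mkcond /=; apply: eq_bigr => i _.
  rewrite /bern_mean /f [i \in supp v]inE /=.
  case vi: (v 0 i != 0); first by rewrite (mem_code_support vC vi) mulr1.
  by case: ifP => _; rewrite ?mulr1 //; lra.
apply: prod_le_expR_card => i; rewrite inE => vi; rewrite mgf_le // andbT.
by rewrite addr_ge0 ?mulr_ge0 ?expR_ge0 ?samp_prob_ge0 // subr_ge0 samp_prob_le1.
Qed.

(* Since [w_i <= wt v] on the support of [v], every weight [1 / p_i] there is at
   most [invp_bound v]. *)
Definition invp_bound v : R := eps ^+ 2 * (wt v)%:R / L.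

Lemma invp_bound_gt0 v : v != 0 -> 0 < invp_bound v.
Proof.
by move=> v_neq0; rewrite /invp_bound divr_gt0 // mulr_gt0 ?exprn_gt0 // ltr0n lt0n wt_eq0.
Qed.

Lemma inv_samp_prob_le v i : v \in C -> v 0 i != 0 -> p i < 1 -> (p i)^-1 <= invp_bound v.
Proof.
move=> vC vi /samp_prob_lt1E ->.
rewrite invf_div ler_pM2r ?invr_gt0 // ler_pM2l ?exprn_gt0 //.
by rewrite ler_nat min_wt_le.
Qed.

Lemma upper_tail v : v \in C -> v != 0 ->
  \sum_S Pr S * expR (eps / (2 * invp_bound v) *
                      (sparse_wt v S - (1 + eps) * (wt v)%:R))
  <= expR (- (L / 4)).
Proof.
move=> vC v_neq0; have M_gt0 := invp_bound_gt0 v_neq0.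
set M := invp_bound v in M_gt0 *; set t := eps / (2 * M); set W := (wt v)%:R.
have t_ge0 : 0 <= t := divr_ge0 (ltW eps_gt0) (mulr_ge0 (ler0n _ 2) (ltW M_gt0)).
under eq_bigr do rewrite mulrBr addrC expRD mulrCA.
rewrite -mulr_sumr.
apply: le_trans (_ : expR (- (t * ((1 + eps) * W))) * expR (W * (t + t ^+ 2 * M)) <= _).
  rewrite ler_pM2l ?expR_gt0 // expect_expR_sparse_wt_le // => i vi.
  apply: scaled_bernoulli_mgf_le; rewrite ?samp_prob_le1 ?(ltW M_gt0) //.
  - by rewrite samp_prob_gt0 // (mem_code_support vC vi).
  - exact: inv_samp_prob_le.
  - have -> : t * M = eps / 2 by rewrite /t; field; rewrite gt_eqF.
    by case/andP: eps01 => _ eps_lt1; lra.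
rewrite -expRD ler_expR le_eqVlt; apply/orP; left; apply/eqP.
have W_gt0 : 0 < W by rewrite ltr0n lt0n wt_eq0.
by rewrite /t /M /invp_bound -/W; field; rewrite !gt_eqF.
Qed.

Lemma lower_tail v : v \in C -> v != 0 ->
  \sum_S Pr S * expR (2 * eps / (3 * invp_bound v) *
                      ((1 - eps) * (wt v)%:R - sparse_wt v S))
  <= expR (- (L / 3)).
Proof.
move=> vC v_neq0; have M_gt0 := invp_bound_gt0 v_neq0.
set M := invp_bound v in M_gt0 *; set t := 2 * eps / (3 * M); set W := (wt v)%:R.
have t_ge0 : 0 <= t :=
  divr_ge0 (mulr_ge0 (ler0n _ 2) (ltW eps_gt0)) (mulr_ge0 (ler0n _ 3) (ltW M_gt0)).
under eq_bigr do rewrite mulrBr expRD mulrCA -mulNr.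
rewrite -mulr_sumr.
apply: le_trans (_ : expR (t * ((1 - eps) * W)) * expR (W * (- t + 3 / 4 * t ^+ 2 * M)) <= _).
  rewrite ler_pM2l ?expR_gt0 // expect_expR_sparse_wt_le // => i vi.
  rewrite mulNr; apply: scaled_bernoulli_mgfN_le; rewrite ?samp_prob_le1 ?(ltW M_gt0) //.
  - by rewrite samp_prob_gt0 // (mem_code_support vC vi).
  - exact: inv_samp_prob_le.
rewrite -expRD ler_expR le_eqVlt; apply/orP; left; apply/eqP.
have W_gt0 : 0 < W by rewrite ltr0n lt0n wt_eq0.
by rewrite /t /M /invp_bound -/W; field; rewrite !gt_eqF.
Qed.

(* Exponential-moment upper bound on the indicator that [approx v S] fails. *)
Definition chernoff_sum v S : R :=
  if v == 0 then 0 else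
  expR (eps / (2 * invp_bound v) * (sparse_wt v S - (1 + eps) * (wt v)%:R)) +
  expR (2 * eps / (3 * invp_bound v) * ((1 - eps) * (wt v)%:R - sparse_wt v S)).

Lemma chernoff_sum_ge0 v S : 0 <= chernoff_sum v S.
Proof. by rewrite /chernoff_sum; case: ifP => _; rewrite ?addr_ge0 ?expR_ge0. Qed.

Lemma expect_chernoff_sum v : v \in C ->
  \sum_S Pr S * chernoff_sum v S <= expR (- (L / 4)) + expR (- (L / 3)).
Proof.
move=> vC; rewrite /chernoff_sum; have [_|v_neq0] := eqVneq v 0.
  by rewrite big1 ?addr_ge0 ?expR_ge0 // => S _; rewrite mulr0.
under eq_bigr do rewrite mulrDr.
by rewrite big_split; apply: lerD; [exact: upper_tail | exact: lower_tail].
Qed.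

Lemma chernoff_sum_ge1 v S : ~~ approx v S -> 1 <= chernoff_sum v S.
Proof.
rewrite /chernoff_sum /approx; have [->|v_neq0] := eqVneq v 0.
  have -> : sparse_wt 0 S = 0.
    by rewrite /sparse_wt big_pred0 // => i; rewrite mxE eqxx andbF.
  have /eqP -> : wt (0 : 'rV[F]_n) == 0%N by rewrite wt_eq0.
  by rewrite !mulr0 lexx.
have M_gt0 := invp_bound_gt0 v_neq0.
case: leP => [lo_ok | lo_bad] /=.
  rewrite -ltNge => hi_bad; apply: ler_wpDr; first exact: expR_ge0.
  by apply/ltW; rewrite expR_gt1 mulr_gt0 ?subr_gt0 // divr_gt0 // mulr_gt0.
move=> _; apply: ler_wpDl; first exact: expR_ge0.
apply/ltW; rewrite expR_gt1 mulr_gt0 ?subr_gt0 //.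
by apply: divr_gt0; apply: mulr_gt0.
Qed.

Lemma expect_size : \sum_S Pr S * (#|S|%:R / bound) <= 1 / 100.
Proof.
under eq_bigr do rewrite mulrA; rewrite -mulr_suml expect_card.
rewrite ler_pdivrMr //; apply: le_trans (_ : L / eps ^+ 2 * k <= _).
  apply: le_trans (_ : \sum_(i in code_support C)
                         L / eps ^+ 2 * ((min_wt C i)%:R)^-1 <= _).
    apply: ler_sum => i _; rewrite /samp_prob ge_min; apply/orP; right.
    by rewrite [in X in X <= _]invfM [in X in X <= _]mulrA.
  rewrite -mulr_sumr ler_wpM2l ?sum_inv_min_wt_le_dim //.
  by rewrite divr_ge0 ?exprn_ge0 ?ltW.
by rewrite /bound /L le_eqVlt; apply/orP; left; apply/eqP; field; rewrite gt_eqF.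
Qed.

Lemma card_code_tail_le : #|C|%:R * (expR (- (L / 4)) + expR (- (L / 3))) <= 3 / 4.
Proof.
have ln2_gt0 := ln2_gt0 R; have ln2_le1 := ln2_le1 R.
set l2 := ln (2 : R) in ln2_gt0 ln2_le1 *.
have r_ge1 := log2q_ge1; have k1 := k_ge1.
have q_gt0 : 0 < q by apply: lt_le_trans q_ge2.
set r := log2 q in r_ge1 *.
have lnqE : ln q = r * l2 by rewrite /r /log2 mulfVK // gt_eqF.
have -> : #|C|%:R = expR (k * ln q).
  by rewrite card_vspace natrX -/q -{1}(lnK (x := q)) ?posrE // -expRM_natl.
have e2 : expR (- l2) = 1 / 2 by rewrite expRN lnK ?posrE // div1r.
have e4 : expR (- (2 * l2)) = 1 / 4.
  by rewrite expRN expRM_natl lnK ?posrE // div1r; lra.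
have kr_ge1 : 1 <= k * r by nra.
rewrite mulrDr -!expRD.
have : expR (k * ln q - L / 4) <= 1 / 2.
  rewrite -e2 ler_expR lnqE /L -/r.
  have : k * r * (l2 - 5 / 2) <= - l2 by nra.
  lra.
have : expR (k * ln q - L / 3) <= 1 / 4.
  rewrite -e4 ler_expR lnqE /L -/r.
  have : k * r * (l2 - 10 / 3) <= - 2 * l2 by nra.
  lra.
lra.
Qed.

Definition good S : bool :=
  `[< (#|S|%:R <= bound) /\ is_sparsifier C eps S (samp_weight C eps) >].

Lemma not_good_le S :
  ~~ good S -> 1 <= #|S|%:R / bound + \sum_(v in C) chernoff_sum v S.
Proof.
move=> /asboolPn S_bad.
have size_ge0 : 0 <= #|S|%:R / bound := divr_ge0 (ler0n _ _) (ltW bound_gt0).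
have sum_ge0 : 0 <= \sum_(v in C) chernoff_sum v S.
  by apply: sumr_ge0 => v _; exact: chernoff_sum_ge0.
have [S_small|S_large] := leP (#|S|%:R) bound; last first.
  by apply: ler_wpDr => //; rewrite ler_pdivlMr // mul1r ltW.
have [/forall_inP S_approx|] := boolP [forall v in C, approx v S].
  by case: S_bad; split; last exact: is_sparsifier_sample.
move=> /forall_inPn[v vC /chernoff_sum_ge1 v_bad].
apply: ler_wpDl => //; rewrite (bigD1 v) //=; apply: ler_wpDr => //.
by apply: sumr_ge0 => u _; exact: chernoff_sum_ge0.
Qed.

(* Markov's inequality for the random variable [#|S| / bound + \sum_v chernoff_sum v S]. *)
Lemma good_pr_gt0 : 0 < \sum_(S | good S) Pr S.
Proof.
have p01 i : i \in code_support C -> 0 <= p i <= 1 by rewrite samp_prob_ge0 samp_prob_le1.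
have bad_le : \sum_(S | ~~ good S) Pr S <= 1 / 100 + 3 / 4.
  apply: le_trans (_ : \sum_S Pr S *
      (#|S|%:R / bound + \sum_(v in C) chernoff_sum v S) <= _).
    rewrite [leRHS](bigID good) /=; apply: ler_wpDl.
      apply: sumr_ge0 => S _; rewrite mulr_ge0 ?sample_pr_ge0 // addr_ge0 //.
        exact: divr_ge0 (ler0n _ _) (ltW bound_gt0).
      by apply: sumr_ge0 => v _; exact: chernoff_sum_ge0.
    apply: ler_sum => S /not_good_le S_bad.
    by rewrite -[leLHS]mulr1 ler_wpM2l ?sample_pr_ge0.
  under eq_bigr do rewrite mulrDr; rewrite big_split /=.
  apply: lerD; first exact: expect_size.
  under eq_bigr do rewrite mulr_sumr; rewrite exchange_big /=.
  apply: le_trans card_code_tail_le; rewrite mulr_natl -sumr_const.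
  by apply: ler_sum => v vC; exact: expect_chernoff_sum.
have := sum_sample_pr (code_support C) p; rewrite (bigID good) /=.
set good_pr := \sum_(S | good S) Pr S.
set bad_pr := \sum_(S | ~~ good S) Pr S in bad_le *.
lra.
Qed.

Lemma sample_pr_samp_pr S : S \subset code_support C -> Pr S = samp_pr C eps S.
Proof.
move=> SC; rewrite /sample_pr (bigID (mem (code_support C))) /=.
rewrite [X in _ * X]big1 ?mulr1.
  by apply: eq_bigr => i iC; rewrite /bern_factor iC.
move=> i /negbTE iC; rewrite /bern_factor iC.
by case: ifP => // /(subsetP SC); rewrite iC.
Qed.

Lemma sampled_sparsifier :
  (exists (S : {set 'I_n}) (w : 'I_n -> R),
      (#|S|%:R <= bound) /\ is_sparsifier C eps S w) /\
  0 < \sum_(S : {set 'I_n} | (S \subset code_support C) && good S) samp_pr C eps S.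
Proof.
have good_gt0 := good_pr_gt0.
have -> : \sum_(S : {set 'I_n} | (S \subset code_support C) && good S) samp_pr C eps S =
          \sum_(S | good S) Pr S.
  rewrite [RHS](bigID (fun S : {set 'I_n} => S \subset code_support C)) /=.
  rewrite [X in _ = _ + X]big1 ?addr0 => [|S /andP[_]]; last first.
    by apply: contraNeq; exact: sample_pr_neq0_sub.
  apply: eq_big => [S | S /andP[SC _]]; first by rewrite andbC.
  exact/esym/sample_pr_samp_pr.
split=> //; have [S /asboolP[S_small S_sparse] | no_good] := pickP good.
  by exists S, (samp_weight C eps).
by move: good_gt0; rewrite big_pred0 ?ltxx.
Qed.

End Sparsification.

Theorem mainTheorem7 :
  exists Cst : rat,
  forall (R : realType) (F : finFieldType) (n : nat)
         (C : {vspace 'rV[F]_n}) (eps : R),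
    0 < eps < 1 -> (1 <= \dim C)%N ->
    let bound : R :=
      ratr Cst * (\dim C)%:R ^+ 2 * log2 (#|F|%:R : R) / eps ^+ 2 in
    (exists (S : {set 'I_n}) (w : 'I_n -> R),
        (#|S|%:R <= bound) /\ is_sparsifier C eps S w) /\
    0 < \sum_(S : {set 'I_n} | (S \subset code_support C) &&
                               `[< (#|S|%:R <= bound) /\
                                   is_sparsifier C eps S (samp_weight C eps) >])
          samp_pr C eps S.
Proof.
exists 1000%:R => R F n C eps eps01 dimC_gt0 bound.
by rewrite /bound ratr_nat; exact: sampled_sparsifier.
Qed.
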